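(* Let $T$ be a tree on $n\geq 3$ vertices whose vertex degrees are $\Delta=d_1\geq d_2\geq\cdots\geq d_n$. Then $$\mathcal{E}(T)\leq \sum_{i=2}^n 2\sqrt{d_i-1}+2\sqrt{\Delta}\leq \sum_{i=1}^n 2\sqrt{d_i-1}+1.$$
   Context: For a finite simple graph $G$ with adjacency matrix $A(G)$ having eigenvalues $\lambda_1,\dots,\lambda_n$, the energy of $G$ is $\mathcal{E}(G)=\sum_{i=1}^n|\lambda_i|$. *)

From mathcomp Require Import all_boot all_order all_algebra.
From mathcomp Require Import algC.
Set Implicit Arguments. Unset Strict Implicit. Unset Printing Implicit Defensive.
Import Order.TTheory GRing.Theory Num.Theory.
Local Open Scope ring_scope.

Definition simple_graph n (e : rel 'I_n) : Prop := symmetric e /\ irreflexive e.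

Definition connected_graph n (e : rel 'I_n) : Prop := forall x y, connect e x y.

Definition acyclic_graph n (e : rel 'I_n) : Prop :=
  forall c : seq 'I_n, (3 <= size c)%N -> ~ ucycle e c.

Definition is_tree n (e : rel 'I_n) : Prop :=
  [/\ simple_graph e, connected_graph e & acyclic_graph e].

Definition deg n (e : rel 'I_n) (v : 'I_n) : nat := #|[set w | e v w]|.

(* degree sequence sorted non-increasingly: d_1 >= d_2 >= ... >= d_n,
   with d_(i+1) = nth 0 (degseq e) i *)
Definition degseq n (e : rel 'I_n) : seq nat :=
  sort geq [seq deg e v | v <- enum 'I_n].

Definition adjmx n (e : rel 'I_n) : 'M[algC]_n := \matrix_(i, j) (e i j)%:R.

(* eigenvalues (with multiplicity) = roots of the characteristic polynomial *)
Definition eigenvalues n (A : 'M[algC]_n) : seq algC :=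
  sval (closed_field_poly_normal (char_poly A)).

Definition energy n (e : rel 'I_n) : algC :=
  \sum_(z <- eigenvalues (adjmx e)) `|z|.

From mathcomp Require Import all_boot all_order all_algebra.
From mathcomp Require Import algC sesquilinear spectral zify ring.
Set Implicit Arguments. Unset Strict Implicit. Unset Printing Implicit Defensive.
Import Order.TTheory GRing.Theory Num.Theory.
Local Open Scope ring_scope.
Local Open Scope sesquilinear_scope.

(* Write the adjacency matrix as A = P^* D P with P unitary and D real
   diagonal; for the unitary U = P^* sgn(D) P one has E(G) = tr(U A).  Orient
   every edge, so that A = B + B^T with B the 0/1 matrix of the orientation;
   Cauchy-Schwarz on the rows of U (for B) and on its columns (for B^T) gives
   E(G) <= 2 sum_v sqrt(outdeg v).  Rooting G at a vertex of maximum degree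
   and orienting each edge from smaller to larger distance to the root (ties
   broken by any injective rank), the root has out-degree Delta and every
   other vertex out-degree at most d_v - 1, as the edge to its parent points
   inwards.  The second inequality is 2 sqrt Delta <= 2 sqrt (Delta - 1) + 1
   for Delta >= 2. *)

Lemma sqr_sum_le_card_sum_sqr (R : numDomainType) (I : finType) (A : {pred I})
    (a : I -> R) :
  (forall i, a i \is Num.real) ->
  (\sum_(i in A) a i) ^+ 2 <= #|A|%:R * \sum_(i in A) a i ^+ 2.
Proof.
move=> a_real.
suff: (\sum_(i in A) a i) ^+ 2 *+ 2 <= (#|A|%:R * \sum_(i in A) a i ^+ 2) *+ 2.
  by rewrite lerMn2r.
have -> : (\sum_(i in A) a i) ^+ 2 *+ 2 =
          \sum_(i in A) \sum_(j in A) a i * a j *+ 2.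
  rewrite expr2 mulr_suml -sumrMnl; apply: eq_bigr => i _.
  by rewrite mulr_sumr -sumrMnl.
have -> : (#|A|%:R * \sum_(i in A) a i ^+ 2) *+ 2 =
          \sum_(i in A) \sum_(j in A) (a i ^+ 2 + a j ^+ 2).
  transitivity (\sum_(i in A) (a i ^+ 2 *+ #|A| + \sum_(j in A) a j ^+ 2)).
    by rewrite big_split /= sumr_const sumrMnl mulr2n mulr_natl.
  by apply: eq_bigr => i _; rewrite big_split /= sumr_const.
apply: ler_sum => i _; apply: ler_sum => j _.
have -> : a i ^+ 2 + a j ^+ 2 = (a i - a j) ^+ 2 + a i * a j *+ 2.
  by rewrite sqrrB addrAC subrK.
by rewrite lerDr real_exprn_even_ge0 // rpredB.
Qed.

Lemma norm_sum_le_sqrt_card (C : numClosedFieldType) (I : finType)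
    (A : {pred I}) (x : I -> C) :
  `|\sum_(i in A) x i| <= sqrtC #|A|%:R * sqrtC (\sum_i `|x i| ^+ 2).
Proof.
have sum_sqr_ge0 (P : pred I) : 0 <= \sum_(i | P i) `|x i| ^+ 2.
  by apply: sumr_ge0 => i _; rewrite exprn_ge0.
have sum_norm_ge0 : 0 <= \sum_(i in A) `|x i| by rewrite sumr_ge0.
apply: le_trans (ler_norm_sum _ _ _) _.
rewrite -[leLHS]sqrCK // -sqrtCM ?nnegrE ?ler0n ?sum_sqr_ge0 //.
rewrite ler_sqrtC ?nnegrE ?exprn_ge0 ?mulr_ge0 ?ler0n ?sum_sqr_ge0 //.
apply: le_trans (sqr_sum_le_card_sum_sqr A (fun i => normr_real (x i))) _.
by rewrite ler_wpM2l ?ler0n // [leRHS](bigID (mem A)) /= lerDl sum_sqr_ge0.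
Qed.

Lemma sqrtC_succ_le (C : numClosedFieldType) (m : nat) : (0 < m)%N ->
  2 * sqrtC (m.+1%:R : C) <= 2 * sqrtC m%:R + 1.
Proof.
move=> m_gt0; set a := sqrtC (m%:R : C).
have a_ge1 : 1 <= a by rewrite -sqrtC1 ler_sqrtC ?nnegrE ?ler0n ?ler1n.
have two_a_ge0 : 0 <= 2 * a by rewrite mulr_ge0 ?ler0n ?(le_trans ler01).
rewrite -(@ler_pXn2r _ 2) ?nnegrE ?mulr_ge0 ?sqrtC_ge0 ?ler0n ?addr_ge0 //.
have -> : m.+1%:R = a ^+ 2 + 1 :> C by rewrite sqrtCK -addn1 natrD.
have -> : (2 * a + 1) ^+ 2 = 2 ^+ 2 * (a ^+ 2 + 1) + (4 * a - 3) by ring.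
rewrite exprMn sqrtCK lerDl subr_ge0.
by rewrite (le_trans _ (ler_wpM2l _ a_ge1)) ?ler0n // mulr1 ler_nat.
Qed.

Lemma char_poly_similar (R : comUnitRingType) n (P M : 'M[R]_n) :
  P \in unitmx -> char_poly (invmx P *m M *m P) = char_poly M.
Proof.
move=> P_unit; rewrite /char_poly /char_poly_mx.
have PVP : map_mx polyC (invmx P) *m map_mx polyC P = 1%:M.
  by rewrite -map_mxM mulVmx // map_mx1.
have -> : 'X%:M - map_mx polyC (invmx P *m M *m P) =
          map_mx polyC (invmx P) *m ('X%:M - map_mx polyC M) *m map_mx polyC P.
  by rewrite !map_mxM mulmxBr mulmxBl mul_mx_scalar -scalemxAl PVP scalemx1.
by rewrite !det_mulmx mulrAC -det_mulmx PVP det1 mul1r.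
Qed.

Lemma eigenvalues_normalmx n (A : 'M[algC]_n) : A \is normalmx ->
  perm_eq (eigenvalues A) [seq spectral_diag A 0 i | i <- enum 'I_n].
Proof.
move=> /orthomx_spectralP A_eq; rewrite /eigenvalues.
case: closed_field_poly_normal => r /= char_r; apply: prod_XsubC_eq.
rewrite big_map enumT -[LHS]scale1r -(monicP (char_poly_monic A)) -char_r.
rewrite [in LHS]A_eq char_poly_similar ?spectral_unit //.
rewrite char_poly_trig ?diag_mx_is_trig //.
by apply: eq_bigr => i _; rewrite mxE eqxx mulr1n.
Qed.

Lemma hermitian_sum_norm_eigenvalues n (A : 'M[algC]_n) : A \is hermsymmx ->
  exists2 U : 'M[algC]_n, U \is unitarymx &
    \sum_(z <- eigenvalues A) `|z| = \tr (U *m A).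
Proof.
move=> A_herm; set P := spectralmx A; set D := spectral_diag A.
have P_unitary : P \is unitarymx := spectral_unitarymx A.
have PPt : P *m P^t* = 1%:M by apply/unitarymxP.
have D_real i : D 0 i \is Num.real.
  by move/mxOverP: (hermitian_spectral_diag_real A_herm); apply.
pose s := \row_i (if 0 <= D 0 i then 1 else -1 : algC).
have s_unitary : diag_mx s \is unitarymx.
  apply/unitarymxP; rewrite tr_diag_mx map_diag_mx mulmx_diag -diag_const_mx.
  congr diag_mx; apply/matrixP => i j; rewrite !mxE.
  by case: ifP; rewrite ?rmorphN rmorph1 ?mulrNN mulr1.
exists (P^t* *m diag_mx s *m P).
  by rewrite !mul_unitarymx ?trmxC_unitary.
have A_normal := hermitian_normalmx A_herm.
have A_eq := orthomx_spectralP A_normal.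
rewrite (perm_big _ (eigenvalues_normalmx A_normal)) big_map enumT.
rewrite {2}A_eq invmx_unitary // -!mulmxA [P *m _]mulmxA PPt mul1mx.
rewrite mxtrace_mulC -!mulmxA PPt mulmx1 mulmx_diag mxtrace_diag.
apply: eq_bigr => i _; rewrite !mxE.
by case: (real_ge0P (D_real i)); rewrite ?mul1r ?mulN1r.
Qed.

Lemma unitarymx_row_norm (C : numClosedFieldType) m n (U : 'M[C]_(m, n)) i :
  U \is unitarymx -> \sum_j `|U i j| ^+ 2 = 1.
Proof.
move=> /unitarymxP /matrixP /(_ i i); rewrite !mxE eqxx mulr1n => <-.
by apply: eq_bigr => j _; rewrite normCK !mxE.
Qed.

Lemma unitarymx_col_norm (C : numClosedFieldType) n (U : 'M[C]_n) j :
  U \is unitarymx -> \sum_i `|U i j| ^+ 2 = 1.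
Proof.
rewrite -trmxC_unitary => /(@unitarymx_row_norm _ _ _ _ j) <-.
by apply: eq_bigr => i _; rewrite !mxE norm_conjC.
Qed.

Lemma mxtrace_mul_adjmx n (e c : rel 'I_n) (U : 'M[algC]_n) :
  (forall v w, e v w = c v w || c w v) -> (forall v w, c v w -> ~~ c w v) ->
  \tr (U *m adjmx e) = \sum_i \sum_(j in [set w | c i w]) U i j
                     + \sum_j \sum_(i in [set w | c j w]) U i j.
Proof.
move=> e_orient c_asym.
have adjmxE i j : adjmx e j i = (c i j)%:R + (c j i)%:R.
  rewrite mxE e_orient orbC.
  case c_ij: (c i j); case c_ji: (c j i); rewrite /= ?add0r ?addr0 //.
  by move: (c_asym _ _ c_ij); rewrite c_ji.
have sum_setE (b : pred 'I_n) (x : 'I_n -> algC) :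
    \sum_(j in [set w | b w]) x j = \sum_j (b j)%:R * x j.
  rewrite big_mkcond; apply: eq_bigr => j _.
  by rewrite inE; case: (b j); rewrite ?mul1r ?mul0r.
under eq_bigr => i _ do rewrite sum_setE.
under [X in _ + X]eq_bigr => j _ do rewrite sum_setE.
rewrite [X in _ + X]exchange_big -big_split /=; apply: eq_bigr => i _.
rewrite mxE -big_split /=; apply: eq_bigr => j _.
by rewrite adjmxE; ring.
Qed.

Lemma energy_le_orientation n (e c : rel 'I_n) :
  (forall v w, e v w = c v w || c w v) -> (forall v w, c v w -> ~~ c w v) ->
  energy e <= \sum_v 2 * sqrtC (deg c v)%:R.
Proof.
move=> e_orient c_asym.
have A_herm : adjmx e \is hermsymmx.
  apply: realsym_hermsym; last by apply/mxOverP => i j; rewrite mxE realn.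
  apply/is_hermitianmxP; rewrite expr0 scale1r.
  by apply/matrixP => i j; rewrite !mxE !e_orient orbC.
have [U U_unitary energyE] := hermitian_sum_norm_eigenvalues A_herm.
have energy_ge0 : 0 <= energy e by rewrite sumr_ge0.
rewrite -(ger0_norm energy_ge0) /energy energyE.
rewrite (mxtrace_mul_adjmx U e_orient c_asym).
rewrite -mulr_sumr mulrDl mul1r.
apply: le_trans (ler_normD _ _) _.
apply: lerD; apply: le_trans (ler_norm_sum _ _ _) _; apply: ler_sum => i _.
- have := norm_sum_le_sqrt_card [set w | c i w] (U i).
  by rewrite unitarymx_row_norm // sqrtC1 mulr1.
- have := norm_sum_le_sqrt_card [set w | c i w] (U^~ i).
  by rewrite unitarymx_col_norm // sqrtC1 mulr1.
Qed.

Lemma connect_descent_potential (T : finType) (e : rel T) (rho : T) :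
  symmetric e -> (forall v, connect e rho v) ->
  exists f : T -> nat,
    f rho = 0%N /\ forall v, v != rho -> exists2 u, e v u & (f u < f v)%N.
Proof.
move=> e_sym rho_connect.
pose reach v k := [exists p : k.-tuple T, path e rho p && (last rho p == v)].
have reach_ex v : exists k, reach v k.
  have /connectP [p p_path p_last] := rho_connect v.
  exists (size p); apply/existsP; exists (in_tuple p).
  by rewrite p_path -p_last /=.
exists (fun v => ex_minn (reach_ex v)); split.
  case: ex_minnP => m _ m_min; apply/eqP; rewrite -leqn0; apply: m_min.
  by apply/existsP; exists [tuple]; rewrite /= eqxx.
move=> v v_neq.
case: ex_minnP => m /existsP [p /andP [p_path /eqP p_last]] m_min.
move: p_path p_last (size_tuple p); case/lastP: (tval p) => [|q x] /=.
  by move=> _ v_rho; rewrite v_rho eqxx in v_neq.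
rewrite rcons_path last_rcons size_rcons => /andP [q_path q_e] <- size_q.
exists (last rho q); first by rewrite e_sym.
case: ex_minnP => k _ k_min; rewrite -size_q ltnS k_min //.
by apply/existsP; exists (in_tuple q); rewrite q_path eqxx.
Qed.

Definition lex_rank (T : finType) (f : T -> nat) (v : T) : nat :=
  f v * #|T| + enum_rank v.

Lemma lex_rank_inj (T : finType) (f : T -> nat) : injective (lex_rank f).
Proof.
move=> u v /(congr1 (modn^~ #|T|)).
by rewrite /lex_rank !modnMDl !modn_small // => /ord_inj/enum_rank_inj.
Qed.

Lemma lex_rank_mono (T : finType) (f : T -> nat) (u v : T) :
  (f u < f v)%N -> (lex_rank f u < lex_rank f v)%N.
Proof.
move=> f_lt; rewrite /lex_rank.
apply: (@leq_trans (f v * #|T|)); last exact: leq_addr.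
apply: (@leq_trans (f u * #|T| + #|T|)); first by rewrite ltn_add2l ltn_ord.
by rewrite -mulSnr leq_mul2r f_lt orbT.
Qed.

Definition orient (T : finType) (e : rel T) (r : T -> nat) : rel T :=
  [rel v w | e v w && (r v < r w)%N].

Lemma orient_sym (T : finType) (e : rel T) (r : T -> nat) :
  symmetric e -> irreflexive e -> injective r ->
  forall v w, e v w = orient e r v w || orient e r w v.
Proof.
move=> e_sym e_irr r_inj v w; rewrite /orient /= [e w v]e_sym -andb_orr.
case e_vw: (e v w) => //=.
have : r v != r w by apply: contraTneq e_vw => /r_inj ->; rewrite e_irr.
by case: ltngtP.
Qed.

Lemma orient_asym (T : finType) (e : rel T) (r : T -> nat) (v w : T) :
  orient e r v w -> ~~ orient e r w v.
Proof.
by rewrite /orient /= => /andP [_ lt_vw]; rewrite negb_and ltnNge ltnW ?orbT.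
Qed.

Section DescentOrientation.

Variables (n : nat) (e : rel 'I_n) (rho : 'I_n) (f : 'I_n -> nat).
Hypotheses (f_rho : f rho = 0%N)
  (f_descent : forall v, v != rho -> exists2 u, e v u & (f u < f v)%N).

Local Notation c := (orient e (lex_rank f)).

Lemma deg_orient_root : irreflexive e -> deg c rho = deg e rho.
Proof.
move=> e_irr; apply: eq_card => w; rewrite !inE /orient /=.
case e_rho_w: (e rho w) => //=; apply: lex_rank_mono.
have w_neq : w != rho by apply: contraTneq e_rho_w => ->; rewrite e_irr.
by have [u _ lt_uw] := f_descent w_neq; rewrite f_rho (leq_ltn_trans _ lt_uw).
Qed.

Lemma deg_orient_le v : v != rho -> (deg c v <= (deg e v).-1)%N.
Proof.
move=> v_neq; have [u e_vu lt_uv] := f_descent v_neq.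
suff /proper_card : [set w | c v w] \proper [set w | e v w].
  by rewrite /deg; lia.
apply/properP; split; first by apply/subsetP => w; rewrite !inE => /andP [].
exists u; rewrite !inE ?e_vu //= negb_and ltnNge ltnW ?orbT //.
exact: lex_rank_mono.
Qed.

End DescentOrientation.

Lemma deg_ge2 n (e : rel 'I_n) (w x y : 'I_n) :
  e w x -> e w y -> x != y -> (1 < deg e w)%N.
Proof.
move=> e_wx e_wy neq_xy; have : #|[set x; y]| = 2%N by rewrite cards2 neq_xy.
move=> <-; apply: subset_leq_card.
by apply/subsetP => z; rewrite !inE => /orP [] /eqP ->.
Qed.

Lemma exists_deg_ge2 n (e : rel 'I_n) :
  (2 < n)%N -> symmetric e -> (forall x y, connect e x y) ->
  exists v, (1 < deg e v)%N.
Proof.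
move=> n_gt2 e_sym e_connect; pose x0 := Ordinal (ltnW (ltnW n_gt2)).
have [f [_ f_descent]] := connect_descent_potential e_sym (e_connect x0).
have root_or_deg2 w : w != x0 -> e x0 w \/ exists v, (1 < deg e v)%N.
  move=> w_neq; have [u e_wu lt_uw] := f_descent w w_neq.
  have [u_x0|u_neq] := eqVneq u x0; first by left; rewrite e_sym -u_x0.
  have [q e_uq lt_qu] := f_descent u u_neq.
  right; exists u; apply: (deg_ge2 (x := w) (y := q)) => //.
    by rewrite e_sym.
  by apply: contraTneq lt_uw => ->; rewrite -leqNgt ltnW.
have : (1 < #|[set~ x0]|)%N by rewrite cardsC1 card_ord; lia.
case/card_gt1P => a [b [a_neq b_neq neq_ab]]; rewrite !inE in a_neq b_neq.
case: (root_or_deg2 a a_neq) => // e_x0a.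
case: (root_or_deg2 b b_neq) => // e_x0b.
by exists x0; apply: deg_ge2 e_x0a e_x0b neq_ab.
Qed.

Lemma energy_le_rooted n (e : rel 'I_n) (rho : 'I_n) :
  symmetric e -> irreflexive e -> (forall v, connect e rho v) ->
  energy e <=
    2 * sqrtC (deg e rho)%:R + \sum_(v | v != rho) 2 * sqrtC (deg e v).-1%:R.
Proof.
move=> e_sym e_irr rho_connect.
have [f [f_rho f_descent]] := connect_descent_potential e_sym rho_connect.
have e_orient := orient_sym e_sym e_irr (@lex_rank_inj _ f).
apply: le_trans (energy_le_orientation e_orient (@orient_asym _ e _)) _.
rewrite (bigD1 rho) //= deg_orient_root //; apply: lerD => //.
apply: ler_sum => v v_neq; rewrite ler_wpM2l ?ler0n // ler_sqrtC ?nnegrE ?ler0n //.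
by rewrite ler_nat (deg_orient_le f_rho f_descent).
Qed.

Lemma size_degseq n (e : rel 'I_n) : size (degseq e) = n.
Proof. by rewrite size_sort size_map size_enum_ord. Qed.

Lemma degseq_head_max n (e : rel 'I_n) : (0 < n)%N ->
  exists rho,
    deg e rho = nth 0%N (degseq e) 0 /\ forall v, (deg e v <= deg e rho)%N.
Proof.
move=> n_gt0.
have degseq_perm := permEl (perm_sort geq [seq deg e v | v <- enum 'I_n]).
have : nth 0%N (degseq e) 0 \in [seq deg e v | v <- enum 'I_n].
  by rewrite -(perm_mem degseq_perm) mem_nth ?size_degseq.
case/mapP => rho _ rho_head; exists rho; split => // v.
have : deg e v \in degseq e by rewrite (perm_mem degseq_perm) map_f ?mem_enum.
have := sort_sorted (fun a b => leq_total b a) [seq deg e v | v <- enum 'I_n].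
rewrite -/(degseq e) -rho_head; case: (degseq e) => [|x s] //= x_path.
rewrite inE => /predU1P [-> //|v_in_s].
have geq_trans : transitive geq := fun _ _ _ le_yx le_zy => leq_trans le_zy le_yx.
by have /allP /(_ _ v_in_s) := order_path_min geq_trans x_path.
Qed.

Lemma big_degseq_behead (R : zmodType) n (e : rel 'I_n) (F : nat -> R)
    (rho : 'I_n) :
  deg e rho = nth 0%N (degseq e) 0 ->
  \sum_(2 <= i < n.+1) F (nth 0%N (degseq e) i.-1) =
  \sum_(v | v != rho) F (deg e v).
Proof.
move=> rho_head; apply: (@addrI _ (F (deg e rho))).
have n_gt0 : (0 < n)%N := leq_ltn_trans (leq0n rho) (ltn_ord rho).
transitivity (\sum_v F (deg e v)); last by rewrite (bigD1 rho).
rewrite rho_head -[X in F (nth _ _ X)]/(1.-1).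
rewrite -(big_ltn (F := fun i => F (nth 0%N (degseq e) i.-1))) //.
rewrite big_add1 /= -{1}(size_degseq e) -(big_nth 0%N predT F).
by rewrite (perm_big _ (permEl (perm_sort _ _))) big_map enumT.
Qed.

Theorem theorem3p1 (n : nat) (e : rel 'I_n) :
  (3 <= n)%N -> is_tree e ->
  let d := fun i : nat => nth 0%N (degseq e) i.-1 in
  let Delta := d 1%N in
  energy e <=
    \sum_(2 <= i < n.+1) 2 * sqrtC (((d i).-1)%:R : algC) + 2 * sqrtC (Delta%:R : algC)
  /\
  \sum_(2 <= i < n.+1) 2 * sqrtC (((d i).-1)%:R : algC) + 2 * sqrtC (Delta%:R : algC) <=
    \sum_(1 <= i < n.+1) 2 * sqrtC (((d i).-1)%:R : algC) + 1.
Proof.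
move=> n_gt2 [[e_sym e_irr] e_connect _] d Delta.
have n_gt0 : (0 < n)%N := ltnW (ltnW n_gt2).
have [rho [rho_head rho_max]] := degseq_head_max e n_gt0.
have Delta_rho : Delta = deg e rho by rewrite rho_head.
have [v deg_v_gt1] := exists_deg_ge2 n_gt2 e_sym e_connect.
have Delta_gt1 : (1 < Delta)%N by rewrite Delta_rho (leq_trans deg_v_gt1).
rewrite (big_degseq_behead (fun k => 2 * sqrtC k.-1%:R) rho_head) -/d.
split; first by rewrite addrC Delta_rho energy_le_rooted.
rewrite (big_ltn (m := 1) (F := fun i => 2 * sqrtC (d i).-1%:R)) ?ltnS //.
rewrite (big_degseq_behead (fun k => 2 * sqrtC k.-1%:R) rho_head) -/d.
rewrite [leRHS]addrAC [leRHS]addrC lerD2l -/Delta.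
rewrite -{1}(prednK (ltnW Delta_gt1)).
by rewrite sqrtC_succ_le // -ltnS prednK // ltnW.
Qed.
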